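(* For any $\lambda, \gamma \geq 1$, there is a polynomial time FPT reduction from $\textsc{GapD}k\textsc{S}(2\lambda\gamma^2)$ to $\textsc{GapD}k\textsc{S}(\lambda, \gamma)$.
   Context: Graphs are finite, simple, undirected. For a graph $G$ let $\mathrm{edge}_{=k}(G) = \max_{S \subseteq V_G, |S| = k} |E_{G[S]}|$ and $\mathrm{edge}_{\leq r}(G) = \max_{S \subseteq V_G, |S| \leq r} |E_{G[S]}|$ (for real $r$). For $\lambda \geq 1$, $\textsc{GapD}k\textsc{S}(\lambda)$: given a graph $G$ and $k, \ell \in \mathbb{N}$, distinguish between (Completeness) $\mathrm{edge}_{=k}(G) \geq \ell$ and (Soundness) $\mathrm{edge}_{=k}(G) < \ell/\lambda$. For $\lambda, \gamma \geq 1$, $\textsc{GapD}k\textsc{S}(\lambda, \gamma)$: given a graph $G$ and $k, \ell \in \mathbb{N}$, distinguish between (Completeness) $\mathrm{edge}_{\leq k}(G) \geq \ell$ and (Soundness) $\mathrm{edge}_{\leq \gamma \cdot k}(G) < \ell/\lambda$. A polynomial time FPT reduction from promise problem $A$ to promise problem $B$ (both with parameter $k$) is a polynomial time map from instances of $A$ to instances of $B$ sending completeness instances to completeness instances and soundness instances to soundness instances, such that the parameter of the output is bounded by a function of the input parameter alone. *)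

From HB Require Import structures.
From mathcomp Require Import all_boot all_order all_algebra.
From mathcomp Require Import reals.
Set Implicit Arguments. Unset Strict Implicit. Unset Printing Implicit Defensive.
Import Order.TTheory GRing.Theory Num.Theory.

Record inst := Inst {
  inst_n : nat;
  inst_E : seq (nat * nat);
  inst_k : nat;
  inst_l : nat }.

Definition adj (I : inst) (u v : 'I_(inst_n I)) : bool :=
  (u != v) && (((val u, val v) \in inst_E I) || ((val v, val u) \in inst_E I)).

Definition edges_in (I : inst) (S : {set 'I_(inst_n I)}) : nat :=
  #|[set p : 'I_(inst_n I) * 'I_(inst_n I) |
      [&& (p.1 < p.2)%N, p.1 \in S, p.2 \in S & @adj I p.1 p.2]]|.

(* edge_{=k}(G)  (0 if there is no k-subset) *)
Definition edge_eq (I : inst) (k : nat) : nat :=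
  \max_(S : {set 'I_(inst_n I)} | #|S| == k) @edges_in I S.

Definition edge_le (R : realType) (I : inst) (r : R) : nat :=
  \max_(S : {set 'I_(inst_n I)} | (#|S|%:R <= r)%R) @edges_in I S.

Local Open Scope ring_scope.

Definition gap1_yes (I : inst) : Prop := (inst_l I <= edge_eq I (inst_k I))%N.
Definition gap1_no (R : realType) (lam : R) (I : inst) : Prop :=
  (edge_eq I (inst_k I))%:R < (inst_l I)%:R / lam.

Definition gap2_yes (R : realType) (I : inst) : Prop :=
  (inst_l I <= edge_le I ((inst_k I)%:R : R))%N.
Definition gap2_no (R : realType) (lam gam : R) (I : inst) : Prop :=
  (edge_le I (gam * (inst_k I)%:R))%:R < (inst_l I)%:R / lam.

Local Close Scope ring_scope.

(* Binary encoding of instances (self-delimiting).                     *)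
Fixpoint bin (fuel n : nat) : seq bool :=
  match fuel with
  | 0 => [::]
  | f.+1 => if n == 0 then [::] else odd n :: bin f n./2
  end.
Definition bits (n : nat) : seq bool := bin n n.   (* LSB first *)

Definition enc_nat (n : nat) : seq bool :=
  flatten [seq [:: true; b] | b <- bits n] ++ [:: false].

Definition enc_edges (E : seq (nat * nat)) : seq bool :=
  flatten [seq true :: enc_nat p.1 ++ enc_nat p.2 | p <- E] ++ [:: false].

Definition enc (I : inst) : seq bool :=
  enc_nat (inst_n I) ++ enc_nat (inst_k I) ++ enc_nat (inst_l I)
    ++ enc_edges (inst_E I).

(* States are 'I_Q.+1 (finitely many); start = ord0, halt = ord_max.   *)
Inductive move := MLeft | MRight | MStay.

Record TM := MkTM {
  tm_Q : nat;
  tm_delta : 'I_tm_Q.+1 -> option bool -> 'I_tm_Q.+1 * option bool * move }.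

(* configuration: state, tape left of head (nearest first), head cell,
   tape right of head; unlisted cells are blank (None). *)
Record config (Q : nat) := Conf {
  c_st : 'I_Q.+1;
  c_left : seq (option bool);
  c_head : option bool;
  c_right : seq (option bool) }.

Definition step (M : TM) (c : config (tm_Q M)) : config (tm_Q M) :=
  if c_st c == ord_max then c else
  let: (q', w, m) := tm_delta (c_st c) (c_head c) in
  match m with
  | MStay => Conf q' (c_left c) w (c_right c)
  | MLeft => match c_left c with
             | [::] => Conf q' [::] None (w :: c_right c)
             | a :: l => Conf q' l a (w :: c_right c)
             end
  | MRight => match c_right c with
              | [::] => Conf q' (w :: c_left c) None [::]
              | a :: r => Conf q' (w :: c_left c) a r
              end
  end.

Definition run (M : TM) (t : nat) (c : config (tm_Q M)) : config (tm_Q M) :=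
  iter t (step (M := M)) c.

Definition init (M : TM) (x : seq bool) : config (tm_Q M) :=
  match x with
  | [::] => Conf ord0 [::] None [::]
  | b :: x' => Conf ord0 [::] (Some b) (map Some x')
  end.

Fixpoint read_out (s : seq (option bool)) : seq bool :=
  match s with
  | Some b :: s' => b :: read_out s'
  | _ => [::]
  end.
Definition output (M : TM) (c : config (tm_Q M)) : seq bool :=
  read_out (c_head c :: c_right c).

Definition halted (M : TM) (c : config (tm_Q M)) : bool := c_st c == ord_max.

Definition poly_fpt_reduction (yesA noA yesB noB : inst -> Prop) : Prop :=
  exists (M : TM) (c : nat) (g : nat -> nat),
    forall I : inst,
      exists t : nat,
        (t <= c * (size (enc I)) ^ c + c)%N /\
        halted (run t (init M (enc I))) /\
        exists I' : inst,
          output (run t (init M (enc I))) = enc I' /\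
          (inst_k I' <= g (inst_k I))%N /\
          (yesA I -> yesB I') /\
          (noA I -> noB I').

From HB Require Import structures.
From mathcomp Require Import all_boot all_order all_algebra.
From mathcomp Require Import reals.
From mathcomp Require Import zify ring lra.
Import Order.TTheory GRing.Theory Num.Theory.
Set Implicit Arguments. Unset Strict Implicit. Unset Printing Implicit Defensive.

(* If [2 <= k <= n] the reduction is the identity.  A vertex set [S] with
   [#|S| <= gam * k] either extends to a [k]-set, or shrinks to a [k]-set [T] with
   [edges_in S * (k * (k - 1)) <= edges_in T * (#|S| * (#|S| - 1))]: deleting the
   vertex of [S] whose removal keeps the most edges keeps a [(#|S| - 2) / #|S|]
   fraction of them, since each edge survives the deletion of every vertex but its two
   ends.  As [k >= 2] this yields [edge_le (gam * k) <= 2 * gam ^+ 2 * edge_eq k].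
   Otherwise [edge_eq k = 0], so the instance is a yes-instance iff [l = 0], and a
   fixed trivial instance is output.  The reduction is computed by an explicit Turing
   machine comparing [n] and [k] bit by bit, in time quadratic in the input size. *)

Lemma exists_subset_card (T : finType) (A : {set T}) k :
  k <= #|A| -> exists2 B : {set T}, B \subset A & #|B| = k.
Proof.
case/card_geqP=> s [s_uniq s_size sA]; exists [set x in s].
  by apply/subsetP=> x; rewrite inE => /sA.
by rewrite cardsE (card_uniqP s_uniq).
Qed.

Lemma exists_superset_card (T : finType) (A : {set T}) k :
  #|A| <= k <= #|T| -> exists2 B : {set T}, A \subset B & #|B| = k.
Proof.
case/andP=> Ak kT.
have [C CA' cardC] : exists2 C : {set T}, C \subset ~: A & #|C| = k - #|A|.
  by apply: exists_subset_card; have := cardsC A; lia.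
exists (A :|: C); first exact: subsetUl.
have AC0 : A :&: C = set0.
  by apply/setP=> x; rewrite !inE; apply/andP=> -[xA /(subsetP CA')]; rewrite inE xA.
by have := cardsUI A C; rewrite AC0 cards0 cardC; lia.
Qed.

Lemma card_setD1D1 (T : finType) (A : {set T}) a b :
  a \in A -> b \in A -> a != b -> #|A :\ a :\ b| = #|A| - 2.
Proof.
move=> aA bA ab; have := cardsD1 a A; have := cardsD1 b (A :\ a).
by rewrite !inE eq_sym ab aA bA /=; lia.
Qed.

Section InducedEdges.
Variable I : inst.
Local Notation V := 'I_(inst_n I).
Local Notation e := (@edges_in I).

Definition induced_edges (S : {set V}) : {set V * V} :=
  [set p : V * V | [&& (p.1 < p.2)%N, p.1 \in S, p.2 \in S & @adj I p.1 p.2]].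

Lemma edges_inE (S : {set V}) : e S = #|induced_edges S|.
Proof. by []. Qed.

Lemma edges_in_mono (S T : {set V}) : S \subset T -> e S <= e T.
Proof.
move=> sST; apply: subset_leq_card; apply/subsetP => p.
by rewrite !inE => /and4P [-> ? ? ->]; rewrite !(subsetP sST).
Qed.

Lemma edges_in_setD1 (S : {set V}) v :
  e (S :\ v) = #|[set p in induced_edges S | (p.1 != v) && (p.2 != v)]|.
Proof.
apply: eq_card => p; rewrite !inE.
by case: (p.1 == v); case: (p.2 == v); rewrite ?andbF ?andbT //= andbA.
Qed.

Lemma sum_edges_in_setD1 (S : {set V}) :
  \sum_(v in S) e (S :\ v) = e S * (#|S| - 2).
Proof.
under eq_bigr do rewrite edges_in_setD1 -sum1_card big_mkcond /=.
rewrite exchange_big edges_inE -sum1_card big_distrl /= [RHS]big_mkcond /=.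
apply: eq_bigr => p _; rewrite mul1n.
case pS: (p \in induced_edges S); last first.
  by apply: big1 => v _; rewrite inE pS.
have := pS; rewrite inE => /and4P [lt12 p1S p2S p_adj].
have p12 : p.1 != p.2 by rewrite neq_ltn lt12.
rewrite -(card_setD1D1 p1S p2S p12) -sum1_card [RHS]big_mkcond [LHS]big_mkcond /=.
apply: eq_bigr => v _; rewrite !inE lt12 p1S p2S p_adj [v == p.1]eq_sym [v == p.2]eq_sym.
by case: (v \in S); case: (p.1 != v); case: (p.2 != v).
Qed.

Lemma exists_setD1_dense (S : {set V}) : 0 < #|S| ->
  exists2 v, v \in S & e S * (#|S| - 2) <= e (S :\ v) * #|S|.
Proof.
case/card_gt0P=> v0 v0S.
case: (@arg_maxnP _ v0 (mem S) (fun v => e (S :\ v)) v0S) => v vS v_max.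
exists v => //; rewrite -sum_edges_in_setD1 -sum1_card big_distrr /=.
by apply: leq_sum => u uS; rewrite muln1; apply: v_max.
Qed.

Lemma exists_dense_subset k (S : {set V}) : k <= #|S| ->
  exists2 T : {set V}, T \subset S &
    #|T| = k /\ e S * (k * (k - 1)) <= e T * (#|S| * (#|S| - 1)).
Proof.
have [k_le1 kS | k_ge2] := leqP k 1.
  have [T TS cardT] := exists_subset_card kS.
  exists T => //; split=> //.
  suff -> : k * (k - 1) = 0 by rewrite muln0.
  by case: k k_le1 {kS cardT} => [|[]].
move Es: #|S| => s; elim: s S Es => [|s IHs] S cardS ks; first by lia.
have [-> | ks'] := eqVneq k s.+1; first by exists S; rewrite ?cardS.
have [v vS dense_v] := exists_setD1_dense (S := S) ltac:(lia).
have cardSv : #|S :\ v| = s by have := cardsD1 v S; rewrite vS cardS; lia.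
have [T TSv [cardT dense_T]] := IHs (S :\ v) cardSv ltac:(lia).
exists T; first exact: subset_trans TSv (subsetDl _ _).
split=> //; move: dense_v; rewrite cardS.
move: (e S) (e (S :\ v)) (e T) dense_T => x y z yz xy.
have s_ge2 : 2 <= s by lia.
have : x * (k * (k - 1)) * (s - 1) <= z * (s.+1 * (s.+1 - 1)) * (s - 1).
  apply: (@leq_trans (y * (k * (k - 1)) * s.+1)).
    by have := leq_mul xy (leqnn (k * (k - 1))); lia.
  by have := leq_mul yz (leqnn s.+1); lia.
by rewrite leq_pmul2r //; lia.
Qed.

Lemma edges_in_le_edge_eq (S : {set V}) : e S <= edge_eq I #|S|.
Proof. exact: (leq_bigmax_cond (P := fun T : {set V} => #|T| == #|S|)). Qed.

Lemma edges_in_card_lt2 (S : {set V}) : #|S| < 2 -> e S = 0.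
Proof.
move=> S_lt2; apply/eqP; rewrite edges_inE cards_eq0; apply/eqP/setP=> p.
rewrite !inE; apply/and4P=> -[lt12 p1S p2S _].
have : #|[set p.1; p.2]| <= #|S|.
  by apply: subset_leq_card; apply/subsetP=> v; rewrite !inE => /orP [] /eqP ->.
by rewrite cards2 neq_ltn lt12; lia.
Qed.

Lemma edge_eq_degenerate k : ~~ (2 <= k <= inst_n I) -> edge_eq I k = 0.
Proof.
rewrite negb_and -!ltnNge => k_bad; apply: big1 => S /eqP cardS.
case/orP: k_bad => [k_lt2 | nk]; first by rewrite edges_in_card_lt2 ?cardS.
by have := max_card S; rewrite card_ord cardS; lia.
Qed.
End InducedEdges.

Section DensestSubgraph.
Local Open Scope ring_scope.
Variables (R : realType) (I : inst).
Local Notation V := 'I_(inst_n I).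
Local Notation e := (@edges_in I).

Lemma falling2_le_scaled (F : realFieldType) (g c s : F) :
  1 <= g -> 2 <= c -> 1 <= s <= g * c ->
  s * (s - 1) <= 2 * g ^+ 2 * (c * (c - 1)).
Proof.
move=> g1 c2 /andP [s1 sgc].
have gc_sq : s * (s - 1) <= g * c * (g * c - 1) by nra.
have : 0 <= g * c * (g * (c - 2) + 1) by apply: mulr_ge0; nra.
rewrite expr2; nra.
Qed.

Lemma edges_in_le_edge_le (r : R) (S : {set V}) : #|S|%:R <= r -> (e S <= edge_le I r)%N.
Proof. exact: (leq_bigmax_cond (P := fun T : {set V} => #|T|%:R <= r)). Qed.

Lemma edge_eq_le_edge_le k : (edge_eq I k <= edge_le I (k%:R : R))%N.
Proof.
by apply/bigmax_leqP=> S /eqP cardS; apply: edges_in_le_edge_le; rewrite cardS.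
Qed.

Lemma edge_le_ub (r B : R) : 0 <= B ->
  (forall S : {set V}, #|S|%:R <= r -> (e S)%:R <= B) -> (edge_le I r)%:R <= B.
Proof.
move=> B_ge0 eB; apply: (big_ind (fun m : nat => m%:R <= B)) => //.
by move=> x y xB yB; rewrite /maxn; case: ifP.
Qed.

Lemma edge_le_scaled (gam : R) k : 1 <= gam -> (2 <= k <= inst_n I)%N ->
  (edge_le I (gam * k%:R))%:R <= 2 * gam ^+ 2 * (edge_eq I k)%:R.
Proof.
move=> gam1 /andP [k2 kn]; set m := edge_eq I k.
have m_ge0 : 0 <= m%:R :> R := ler0n R m.
have gam2 : 1 <= gam ^+ 2 by rewrite expr_ge1 //; lra.
apply: edge_le_ub => [|S S_gk]; first by rewrite !mulr_ge0 //; lra.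
have [Sk | kS] := leqP #|S| k.
  have [T ST cardT] := @exists_superset_card _ S k ltac:(by rewrite card_ord Sk).
  have : (e S <= m)%N by rewrite /m -cardT (leq_trans (edges_in_mono ST)) ?edges_in_le_edge_eq.
  by rewrite -(ler_nat R); nra.
have [T TS [cardT dense_T]] := exists_dense_subset (ltnW kS).
have eTm : (e T <= m)%N by rewrite /m -cardT edges_in_le_edge_eq.
have := leq_trans dense_T (leq_mul eTm (leqnn _)).
rewrite -(ler_nat R) !natrM !natrB ?(leq_trans _ kS) //; last by lia.
have c2 : 2 <= k%:R :> R by rewrite (ler_nat R 2).
have s_range : 1 <= (#|S|%:R : R) <= gam * k%:R by rewrite S_gk andbT ler1n; lia.
have := falling2_le_scaled gam1 c2 s_range.
set s := #|S|%:R; set c := k%:R => bound dense.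
have c_pos : 0 < c * (c - 1) by nra.
rewrite -(ler_pM2r c_pos); apply: (le_trans dense).
have -> : 2 * gam ^+ 2 * m%:R * (c * (c - 1)) = m%:R * (2 * gam ^+ 2 * (c * (c - 1))).
  by ring.
by rewrite ler_wpM2l.
Qed.
End DensestSubgraph.

Definition yes_inst := Inst 1 [::] 0 0.

Definition no_inst := Inst 0 [::] 0 1.

Definition reduce (I : inst) : inst :=
  if 2 <= inst_k I <= inst_n I then I
  else if inst_l I == 0 then yes_inst else no_inst.

Lemma reduce_k I : inst_k (reduce I) <= inst_k I.
Proof. by rewrite /reduce; case: ifP => // _; case: ifP. Qed.

Section GapReduction.
Local Open Scope ring_scope.
Variables (R : realType) (lam gam : R).

Lemma gap_preserved I : 1 <= lam -> 1 <= gam -> (2 <= inst_k I <= inst_n I)%N ->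
  (gap1_yes I -> gap2_yes R I) /\ (gap1_no (2 * lam * gam ^+ 2) I -> gap2_no lam gam I).
Proof.
rewrite /gap1_yes /gap2_yes /gap1_no /gap2_no => lam1 gam1 k_ok; split.
  by move=> /leq_trans; apply; apply: edge_eq_le_edge_le.
set m := (edge_eq I (inst_k I))%:R.
have lam_pos : 0 < lam by lra.
have d_pos : 0 < 2 * lam * gam ^+ 2 by rewrite !mulr_gt0 ?exprn_gt0 //; lra.
rewrite !ltr_pdivlMr // => small; apply: le_lt_trans small.
have -> : m * (2 * lam * gam ^+ 2) = 2 * gam ^+ 2 * m * lam by ring.
by rewrite ler_pM2r ?edge_le_scaled.
Qed.

Lemma reduce_correct I : 1 <= lam -> 1 <= gam ->
  (gap1_yes I -> gap2_yes R (reduce I)) /\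
  (gap1_no (2 * lam * gam ^+ 2) I -> gap2_no lam gam (reduce I)).
Proof.
rewrite /reduce => lam1 gam1; case: ifP => [k_ok | /negbT k_bad]; first exact: gap_preserved.
rewrite /gap1_yes /gap1_no edge_eq_degenerate //.
case: eqP => [-> | /eqP l_pos]; first by split=> // /=; rewrite mul0r ltxx.
split=> [|_]; first by rewrite leqn0 (negbTE l_pos).
rewrite /gap2_no /= (_ : edge_le _ _ = 0%N) ?divr_gt0 //; first lra.
apply: big1 => S _; apply: edges_in_card_lt2.
by rewrite (leq_ltn_trans (max_card S)) // card_ord.
Qed.
End GapReduction.

Definition nat_of_bits (s : seq bool) : nat := foldr (fun (b : bool) m => b + m.*2) 0 s.

Definition canonical_bits (s : seq bool) : bool := (s == [::]) || last false s.

Lemma bin_correct fuel n : n <= fuel ->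
  nat_of_bits (bin fuel n) = n /\ canonical_bits (bin fuel n).
Proof.
elim: fuel n => [|fuel IH] n n_le; first by move: n_le; rewrite leqn0 => /eqP ->.
rewrite /=; have [-> //|n_neq0] := eqVneq n 0.
have [val_half can_half] := IH n./2 ltac:(rewrite -divn2; lia).
split; first by rewrite /= val_half odd_double_half.
move: can_half val_half; rewrite /canonical_bits /=.
case: (bin fuel n./2) => [|b s] //= _ val_half.
by move: n_neq0; rewrite -[n]odd_double_half -val_half; case: (odd n).
Qed.

Lemma nat_of_bitsK n : nat_of_bits (bits n) = n.
Proof. by case: (bin_correct (leqnn n)). Qed.

Lemma bits_eq0 n : (bits n == [::]) = (n == 0).
Proof. by apply/eqP/eqP=> [bits0 | -> //]; rewrite -(nat_of_bitsK n) bits0. Qed.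

Lemma bits_canonical n : canonical_bits (bits n).
Proof. by case: (bin_correct (leqnn n)). Qed.

Lemma nat_of_bits_lt s : nat_of_bits s < 2 ^ size s.
Proof. by elim: s => //= b s IH; rewrite expnS; case: b => /=; lia. Qed.

Lemma nat_of_bits_rcons s b : nat_of_bits (rcons s b) = nat_of_bits s + b * 2 ^ size s.
Proof. by elim: s => [|x s IH] /=; [case: b | rewrite IH expnS; lia]. Qed.

Lemma canonical_nat_of_bits_ge s : canonical_bits s -> s != [::] ->
  2 ^ (size s).-1 <= nat_of_bits s.
Proof.
case/lastP: s => // s b; rewrite /canonical_bits size_rcons last_rcons.
have -> : (rcons s b == [::]) = false by case: s.
move=> /= -> _.
by rewrite nat_of_bits_rcons mul1n leq_addl.
Qed.

Lemma nat_of_bits_lt_size s1 s2 : canonical_bits s2 -> size s1 < size s2 ->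
  nat_of_bits s1 < nat_of_bits s2.
Proof.
move=> can2 size_lt; have s2_nil : s2 != [::] by case: s2 size_lt can2.
apply: leq_trans (nat_of_bits_lt s1) (leq_trans _ (canonical_nat_of_bits_ge can2 s2_nil)).
by rewrite leq_exp2l //; case: (size s2) size_lt.
Qed.

Lemma ltn_size_bits m n : size (bits m) < size (bits n) -> m < n.
Proof.
by move=> ?; rewrite -(nat_of_bitsK m) -(nat_of_bitsK n) nat_of_bits_lt_size ?bits_canonical.
Qed.

Inductive cmp := CLt | CEq | CGt.

Definition cmp_nat (m n : nat) : cmp := if m < n then CLt else if m == n then CEq else CGt.

(* Bits are read least significant first, so a later differing pair of bits decides. *)
Definition cmp_step (c : cmp) (x y : bool) : cmp :=
  if x && ~~ y then CGt else if ~~ x && y then CLt else c.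

Definition cmp_bits (s1 s2 : seq bool) : cmp :=
  foldl (fun c p => cmp_step c p.1 p.2) CEq (zip s1 s2).

Lemma cmp_bits_rcons s1 s2 x y : size s1 = size s2 ->
  cmp_bits (rcons s1 x) (rcons s2 y) = cmp_step (cmp_bits s1 s2) x y.
Proof. by move=> eq_size; rewrite /cmp_bits zip_rcons // -cats1 foldl_cat. Qed.

Lemma cmp_bitsE s1 s2 : size s1 = size s2 ->
  cmp_bits s1 s2 = cmp_nat (nat_of_bits s1) (nat_of_bits s2).
Proof.
elim/last_ind: s1 s2 => [|s1 x IH] s2; first by case: s2.
case/lastP: s2 => [|s2 y]; first by rewrite size_rcons.
rewrite !size_rcons => -[eq_size].
rewrite cmp_bits_rcons // IH // !nat_of_bits_rcons -eq_size.
have := nat_of_bits_lt s1; have := nat_of_bits_lt s2; rewrite -eq_size.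
rewrite /cmp_step /cmp_nat; move: (2 ^ size s1) => P lt2 lt1.
case: x; case: y => /=; rewrite ?mul1n ?mul0n ?addn0 ?ltn_add2r ?eqn_add2r //.
- by rewrite ifF ?ifF //; apply/negbTE; lia.
- by rewrite ifT //; lia.
Qed.

Fixpoint cells (ps : seq (option bool * bool)) : seq (option bool) :=
  if ps is p :: ps' then p.1 :: Some p.2 :: cells ps' else [::].

Definition flagged (fl : option bool) (s : seq bool) := cells [seq (fl, x) | x <- s].

Notation unmarked := (flagged (Some true)).

Notation marked := (flagged None).

Lemma cells_cat ps1 ps2 : cells (ps1 ++ ps2) = cells ps1 ++ cells ps2.
Proof. by elim: ps1 => //= p ps1 ->. Qed.

Lemma flagged_cat fl s1 s2 : flagged fl (s1 ++ s2) = flagged fl s1 ++ flagged fl s2.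
Proof. by rewrite /flagged map_cat cells_cat. Qed.

Lemma flagged_cons fl x s : flagged fl (x :: s) = fl :: Some x :: flagged fl s.
Proof. by []. Qed.

Lemma flagged_rcons fl s x : flagged fl (rcons s x) = flagged fl s ++ [:: fl; Some x].
Proof. by rewrite -cats1 flagged_cat. Qed.

Lemma size_flagged fl s : size (flagged fl s) = 2 * size s.
Proof. by elim: s => //= x s; rewrite /flagged /= => ->; lia. Qed.

Lemma enc_nat_cells n : map Some (enc_nat n) = unmarked (bits n) ++ [:: Some false].
Proof. by rewrite /enc_nat map_cat; congr (_ ++ _); elim: (bits n) => //= b s ->. Qed.

Inductive state :=
| Begin | Enter | SkipNFlag | SkipNBit | PeekK0 | PeekK1 | PeekK2 | Unpeek2 | Unpeek1
| RewindBit | RewindFlag | SkipKBit | SkipKFlag | TestL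
| WriteYes1 | WriteYes2 | WriteYes3 | WriteYes4 | WriteYes5
| WriteNo1 | WriteNo2 | WriteNo3 | WriteNo4 | WriteNo5 | WriteEnd
| Return1 | Return2 | Return3 | Return4 | Return5
| RestoreKBit | RestoreKFlag | RestoreKSep | RestoreNFlag | RestoreNBit
| NextN of cmp | NextN' of cmp | EndN of cmp | EndN' of cmp
| BackKFlag of cmp | BackKBit of cmp | BackKSep of cmp | BackNFlag of cmp | BackNBit of cmp
| ReadN of cmp | SkipNRest of cmp & bool | SkipNRest' of cmp & bool
| SkipKDone of cmp & bool | SkipKDone' of cmp & bool | ReadK of cmp & bool
| Halt.

Definition cmp_code (c : cmp) : nat := match c with CLt => 0 | CEq => 1 | CGt => 2 end.

Definition state_code (s : state) : nat :=
  match s with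
  | Begin => 0 | Enter => 1 | SkipNFlag => 2 | SkipNBit => 3 | PeekK0 => 4 | PeekK1 => 5
  | PeekK2 => 6 | Unpeek2 => 7 | Unpeek1 => 8 | RewindBit => 9 | RewindFlag => 10
  | SkipKBit => 11 | SkipKFlag => 12 | TestL => 13
  | WriteYes1 => 14 | WriteYes2 => 15 | WriteYes3 => 16 | WriteYes4 => 17 | WriteYes5 => 18
  | WriteNo1 => 19 | WriteNo2 => 20 | WriteNo3 => 21 | WriteNo4 => 22 | WriteNo5 => 23
  | WriteEnd => 24 | Return1 => 25 | Return2 => 26 | Return3 => 27 | Return4 => 28
  | Return5 => 29
  | RestoreKBit => 30 | RestoreKFlag => 31 | RestoreKSep => 32 | RestoreNFlag => 33
  | RestoreNBit => 34
  | NextN c => 35 + cmp_code c | NextN' c => 38 + cmp_code c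
  | EndN c => 41 + cmp_code c | EndN' c => 44 + cmp_code c
  | BackKFlag c => 47 + cmp_code c | BackKBit c => 50 + cmp_code c
  | BackKSep c => 53 + cmp_code c | BackNFlag c => 56 + cmp_code c
  | BackNBit c => 59 + cmp_code c | ReadN c => 62 + cmp_code c
  | SkipNRest c x => 65 + cmp_code c + 3 * x | SkipNRest' c x => 71 + cmp_code c + 3 * x
  | SkipKDone c x => 77 + cmp_code c + 3 * x | SkipKDone' c x => 83 + cmp_code c + 3 * x
  | ReadK c x => 89 + cmp_code c + 3 * x
  | Halt => 95
  end.

Definition all_cmp (f : cmp -> state) := [:: f CLt; f CEq; f CGt].

Definition all_cmp_bool (f : cmp -> bool -> state) :=
  [:: f CLt false; f CEq false; f CGt false; f CLt true; f CEq true; f CGt true].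

Definition all_states : seq state :=
  [:: Begin; Enter; SkipNFlag; SkipNBit; PeekK0; PeekK1; PeekK2; Unpeek2; Unpeek1;
      RewindBit; RewindFlag; SkipKBit; SkipKFlag; TestL;
      WriteYes1; WriteYes2; WriteYes3; WriteYes4; WriteYes5;
      WriteNo1; WriteNo2; WriteNo3; WriteNo4; WriteNo5; WriteEnd;
      Return1; Return2; Return3; Return4; Return5;
      RestoreKBit; RestoreKFlag; RestoreKSep; RestoreNFlag; RestoreNBit]
  ++ all_cmp NextN ++ all_cmp NextN' ++ all_cmp EndN ++ all_cmp EndN'
  ++ all_cmp BackKFlag ++ all_cmp BackKBit ++ all_cmp BackKSep
  ++ all_cmp BackNFlag ++ all_cmp BackNBit ++ all_cmp ReadN
  ++ all_cmp_bool SkipNRest ++ all_cmp_bool SkipNRest' ++ all_cmp_bool SkipKDone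
  ++ all_cmp_bool SkipKDone' ++ all_cmp_bool ReadK ++ [:: Halt].

Lemma state_codeK s : nth Halt all_states (state_code s) = s.
Proof. by case: s => //; case=> //; case. Qed.

Lemma state_code_le s : state_code s <= 95.
Proof. by case: s => //; case=> //; case. Qed.

Lemma state_code_lt s : s <> Halt -> state_code s < 95.
Proof.
move=> s_run; rewrite ltn_neqAle state_code_le andbT; apply/eqP=> s_code.
by apply: s_run; rewrite -(state_codeK s) s_code.
Qed.

(* The input [enc I] begins with the (flag, bit) cell pairs of [n] and of [k], each
   closed by a [Some false] separator ([enc_nat_cells]).  The machine compares [n]
   and [k] bitwise, least significant bit first, marking each bit it has read by
   blanking its flag and carrying the comparison so far in its state.  If
   [2 <= k <= n] it restores the flags and halts on the unchanged input; otherwise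
   it overwrites the cells of [l] by the encoding of a trivial instance. *)
Definition table (s : state) (h : option bool) : state * option bool * move :=
  match s, h with
  | Begin, _ => (Enter, h, MLeft)
  | Enter, _ => (SkipNFlag, h, MRight)
  | SkipNFlag, Some true => (SkipNBit, h, MRight)
  | SkipNFlag, Some false => (PeekK0, h, MRight)
  | SkipNBit, _ => (SkipNFlag, h, MRight)
  | PeekK0, Some false => (TestL, h, MRight)
  | PeekK0, Some true => (PeekK1, h, MRight)
  | PeekK1, Some false => (Unpeek1, h, MLeft)
  | PeekK1, Some true => (PeekK2, h, MRight)
  | PeekK2, Some false => (TestL, h, MRight)
  | PeekK2, Some true => (Unpeek2, h, MLeft)
  | Unpeek2, _ => (Unpeek1, h, MLeft)
  | Unpeek1, _ => (RewindFlag, h, MLeft)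
  | RewindBit, None => (NextN CEq, h, MRight)
  | RewindBit, Some _ => (RewindFlag, h, MLeft)
  | RewindFlag, _ => (RewindBit, h, MLeft)
  | NextN c, Some true => (ReadN c, None, MRight)
  | NextN c, Some false => (EndN c, h, MRight)
  | ReadN c, Some x => (SkipNRest c x, h, MRight)
  | SkipNRest c x, Some true => (SkipNRest' c x, h, MRight)
  | SkipNRest c x, Some false => (SkipKDone c x, h, MRight)
  | SkipNRest' c x, _ => (SkipNRest c x, h, MRight)
  | SkipKDone c x, None => (SkipKDone' c x, h, MRight)
  | SkipKDone c x, Some true => (ReadK c x, None, MRight)
  | SkipKDone c x, Some false => (RestoreKBit, h, MLeft)
  | SkipKDone' c x, _ => (SkipKDone c x, h, MRight)
  | ReadK c x, Some y => (BackKFlag (cmp_step c x y), h, MLeft)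
  | BackKFlag c, _ => (BackKBit c, h, MLeft)
  | BackKBit c, Some true => (BackKFlag c, h, MLeft)
  | BackKBit c, Some false => (BackKSep c, h, MLeft)
  | BackKSep c, None => (BackKBit c, h, MLeft)
  | BackKSep c, Some _ => (BackNFlag c, h, MLeft)
  | BackNFlag c, None => (NextN' c, h, MRight)
  | BackNFlag c, Some _ => (BackNBit c, h, MLeft)
  | BackNBit c, _ => (BackNFlag c, h, MLeft)
  | NextN' c, _ => (NextN c, h, MRight)
  | EndN c, None => (EndN' c, h, MRight)
  | EndN' c, _ => (EndN c, h, MRight)
  | EndN c, Some true => (SkipKBit, h, MRight)
  | EndN c, Some false => if c is CLt then (TestL, h, MRight) else (RestoreKBit, h, MLeft)
  | SkipKBit, _ => (SkipKFlag, h, MRight)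
  | SkipKFlag, Some true => (SkipKBit, h, MRight)
  | SkipKFlag, Some false => (TestL, h, MRight)
  | TestL, Some false => (WriteYes1, Some true, MRight)
  | TestL, _ => (WriteNo1, Some false, MRight)
  | WriteYes1, _ => (WriteYes2, Some true, MRight)
  | WriteYes2, _ => (WriteYes3, Some false, MRight)
  | WriteYes3, _ => (WriteYes4, Some false, MRight)
  | WriteYes4, _ => (WriteYes5, Some false, MRight)
  | WriteYes5, _ => (WriteEnd, Some false, MRight)
  | WriteNo1, _ => (WriteNo2, Some false, MRight)
  | WriteNo2, _ => (WriteNo3, Some true, MRight)
  | WriteNo3, _ => (WriteNo4, Some true, MRight)
  | WriteNo4, _ => (WriteNo5, Some false, MRight)
  | WriteNo5, _ => (WriteEnd, Some false, MRight)
  | WriteEnd, _ => (Return5, None, MLeft)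
  | Return5, _ => (Return4, h, MLeft)
  | Return4, _ => (Return3, h, MLeft)
  | Return3, _ => (Return2, h, MLeft)
  | Return2, _ => (Return1, h, MLeft)
  | Return1, _ => (Halt, h, MLeft)
  | RestoreKBit, Some true => (RestoreKFlag, h, MLeft)
  | RestoreKBit, Some false => (RestoreKSep, h, MLeft)
  | RestoreKFlag, _ => (RestoreKBit, Some true, MLeft)
  | RestoreKSep, None => (RestoreKBit, Some true, MLeft)
  | RestoreKSep, Some _ => (RestoreNFlag, h, MLeft)
  | RestoreNFlag, _ => (RestoreNBit, Some true, MLeft)
  | RestoreNBit, Some _ => (RestoreNFlag, h, MLeft)
  | RestoreNBit, None => (Halt, h, MRight)
  | _, _ => (Halt, h, MStay)
  end.

Definition state_index (s : state) : 'I_96 := inord (state_code s).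

Definition delta (q : 'I_96) (h : option bool) : 'I_96 * option bool * move :=
  let: (s', w, m) := table (nth Halt all_states q) h in (state_index s', w, m).

Definition reducer : TM := @MkTM 95 delta.

(* [A] lists the cells left of the head in tape order; [B] starts with the head cell. *)
Definition conf (s : state) (A B : seq (option bool)) : config (tm_Q reducer) :=
  @Conf 95 (state_index s) (rev A) (head None B) (behead B).

Lemma state_indexK s : nth Halt all_states (state_index s) = s.
Proof. by rewrite /state_index inordK ?state_codeK // ltnS state_code_le. Qed.

Lemma state_index_halt s : s <> Halt -> (state_index s == ord_max) = false.
Proof.
move=> s_run; apply/negbTE; rewrite -val_eqE /= /state_index inordK ?ltnS ?state_code_le //.
by rewrite neq_ltn state_code_lt.
Qed.

Lemma step_right s A B s' w : s <> Halt -> table s (head None B) = (s', w, MRight) ->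
  step (conf s A B) = conf s' (rcons A w) (behead B).
Proof.
move=> s_run s_table; rewrite /step /= state_index_halt // /delta state_indexK s_table /=.
by rewrite /conf rev_rcons; case: (behead B).
Qed.

Lemma step_left s A x B s' w : s <> Halt -> table s (head None B) = (s', w, MLeft) ->
  step (conf s (rcons A x) B) = conf s' A (x :: w :: behead B).
Proof.
move=> s_run s_table; rewrite /step /= state_index_halt // /delta state_indexK s_table /=.
by rewrite /conf rev_rcons.
Qed.

Lemma step_left_edge s B s' w : s <> Halt -> table s (head None B) = (s', w, MLeft) ->
  step (conf s [::] B) = conf s' [::] (None :: w :: behead B).
Proof.
by move=> s_run s_table; rewrite /step /= state_index_halt // /delta state_indexK s_table.
Qed.

Lemma init_conf x : init reducer x = conf Begin [::] (map Some x).
Proof.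
rewrite /conf; have -> : state_index Begin = ord0.
  by apply/val_inj; rewrite /= /state_index inordK.
by case: x.
Qed.

Lemma runS c t : run t.+1 c = run (M := reducer) t (step c).
Proof. by rewrite /run iterSr. Qed.

Lemma run_sweep_right F G fl s A B : F <> Halt -> G <> Halt ->
  table F fl = (G, fl, MRight) -> (forall x, table G (Some x) = (F, Some x, MRight)) ->
  run (2 * size s) (conf F A (flagged fl s ++ B)) = conf F (A ++ flagged fl s) B.
Proof.
move=> F_run G_run F_table G_table; elim: s A => [|x s IHs] A; first by rewrite cats0.
rewrite mulnS !runS flagged_cons !cat_cons.
rewrite (@step_right F A (fl :: _) G fl F_run F_table).
rewrite (@step_right G (rcons A fl) (Some x :: _) F (Some x) G_run (G_table x)) IHs.
by rewrite -!cats1 -!catA.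
Qed.

(* Sweeping left over [cells ps]: [Fb] reads a bit cell [Some b], then [g b] reads
   the flag cell before it and overwrites it by [wf]. *)
Lemma run_sweep_left Fb (g : bool -> state) wf (ps : seq (option bool * bool)) :
  Fb <> Halt -> (forall b, g b <> Halt) ->
  (forall b, table Fb (Some b) = (g b, Some b, MLeft)) ->
  (forall p, p \in ps -> table (g p.2) p.1 = (Fb, wf, MLeft)) ->
  forall F h w A a B, F <> Halt -> table F h = (Fb, w, MLeft) ->
  run (2 * size ps).+1 (conf F (rcons A a ++ cells ps) (h :: B)) =
  conf Fb A (a :: flagged wf (map snd ps) ++ w :: B).
Proof.
move=> Fb_run g_run Fb_table.
elim/last_ind: ps => [|ps p IHps] g_table F h w A a B F_run F_table.
  by rewrite cats0 runS (@step_left F A a (h :: B) Fb w F_run F_table).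
have cells_rcons : rcons A a ++ cells (rcons ps p) =
    rcons (rcons (rcons A a ++ cells ps) p.1) (Some p.2).
  by rewrite -(cats1 ps) cells_cat /= -!cats1 -!catA.
rewrite size_rcons mulnS 2!runS cells_rcons.
rewrite (@step_left F _ (Some p.2) (h :: B) Fb w F_run F_table).
rewrite (@step_left Fb _ p.1 (Some p.2 :: _) (g p.2) (Some p.2) Fb_run (Fb_table p.2)).
rewrite (IHps _ (g p.2) p.1 wf A a _ (g_run _)); last 2 first.
- by move=> q q_ps; apply: g_table; rewrite mem_rcons in_cons q_ps orbT.
- by apply: g_table; rewrite mem_rcons mem_head.
by rewrite map_rcons flagged_rcons -catA.
Qed.

Section HaltsWith.
Variable out : seq bool.

Definition halts_with (c : config (tm_Q reducer)) (N : nat) : Prop :=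
  exists2 t, t <= N & halted (run t c) /\ output (run t c) = out.

Lemma halts_with_le c N N' : N <= N' -> halts_with c N -> halts_with c N'.
Proof. by move=> le_N [t le_t halts]; exists t; rewrite ?(leq_trans le_t). Qed.

Lemma halts_with_run t c c' N : run t c = c' -> t <= N ->
  halts_with c' (N - t) -> halts_with c N.
Proof.
move=> <- le_t [t' le_t' halts]; exists (t' + t); first by lia.
by rewrite /run iterD.
Qed.

Lemma halts_with_step c N : 0 < N -> halts_with (step c) N.-1 -> halts_with c N.
Proof. by move=> N_gt0 halts; apply: (halts_with_run (t := 1) erefl); rewrite ?subn1. Qed.

Lemma halts_with_halt A B : read_out (head None B :: behead B) = out ->
  halts_with (conf Halt A B) 0.
Proof.
move=> read_B; exists 0 => //; split=> //.
by rewrite /halted /= -val_eqE /= /state_index inordK.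
Qed.

Lemma halts_with_right s A B s' w N :
  s <> Halt -> table s (head None B) = (s', w, MRight) -> 0 < N ->
  halts_with (conf s' (rcons A w) (behead B)) N.-1 -> halts_with (conf s A B) N.
Proof.
by move=> s_run s_table N_gt0; rewrite -(step_right _ s_run s_table); apply: halts_with_step.
Qed.

Lemma halts_with_left s A x B s' w N :
  s <> Halt -> table s (head None B) = (s', w, MLeft) -> 0 < N ->
  halts_with (conf s' A (x :: w :: behead B)) N.-1 -> halts_with (conf s (rcons A x) B) N.
Proof.
by move=> s_run s_table N_gt0; rewrite -(step_left _ _ s_run s_table); apply: halts_with_step.
Qed.

Lemma halts_with_right_cons s A h B s' w N :
  s <> Halt -> table s h = (s', w, MRight) -> 0 < N ->
  halts_with (conf s' (rcons A w) B) N.-1 -> halts_with (conf s A (h :: B)) N.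
Proof. exact: (@halts_with_right s A (h :: B)). Qed.

Lemma halts_with_left_cons s A x h B s' w N :
  s <> Halt -> table s h = (s', w, MLeft) -> 0 < N ->
  halts_with (conf s' A (x :: w :: B)) N.-1 -> halts_with (conf s (rcons A x) (h :: B)) N.
Proof. exact: (@halts_with_left s A x (h :: B)). Qed.

Lemma halts_with_begin B N : B != [::] -> 0 < N ->
  halts_with (conf Enter [::] (None :: B)) N.-1 -> halts_with (conf Begin [::] B) N.
Proof.
case: B => // h B _ N_gt0; rewrite -(@step_left_edge Begin (h :: B) Enter h) //.
exact: halts_with_step.
Qed.

Lemma halts_with_sweep_right F G fl s A B N :
  table F fl = (G, fl, MRight) -> F <> Halt -> G <> Halt ->
  (forall x, table G (Some x) = (F, Some x, MRight)) -> 2 * size s <= N ->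
  halts_with (conf F (A ++ flagged fl s) B) (N - 2 * size s) ->
  halts_with (conf F A (flagged fl s ++ B)) N.
Proof.
move=> F_table F_run G_run G_table; apply: halts_with_run.
exact: (run_sweep_right _ _ _ F_run G_run F_table G_table).
Qed.

Lemma halts_with_sweep_left F h Fb w (g : bool -> state) wf
    (ps : seq (option bool * bool)) A a B N :
  table F h = (Fb, w, MLeft) -> F <> Halt -> Fb <> Halt -> (forall b, g b <> Halt) ->
  (forall b, table Fb (Some b) = (g b, Some b, MLeft)) ->
  (forall p, p \in ps -> table (g p.2) p.1 = (Fb, wf, MLeft)) ->
  (2 * size ps).+1 <= N ->
  halts_with (conf Fb A (a :: flagged wf (map snd ps) ++ w :: B)) (N - (2 * size ps).+1) ->
  halts_with (conf F (rcons A a ++ cells ps) (h :: B)) N.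
Proof.
move=> F_table F_run Fb_run g_run Fb_table g_table.
by apply: halts_with_run; apply: run_sweep_left.
Qed.
End HaltsWith.

(* The [_cons] forms are tried first: they leave no [head]/[behead] redexes behind. *)
Ltac step_right :=
  first [ apply: halts_with_right_cons; [discriminate | reflexivity | lia | ]
        | apply: halts_with_right; [discriminate | reflexivity | lia | ] ].

Ltac step_left :=
  first [ apply: halts_with_left_cons; [discriminate | reflexivity | lia | ]
        | apply: halts_with_left; [discriminate | reflexivity | lia | ] ].

Ltac sweep_right :=
  eapply halts_with_sweep_right; [reflexivity | discriminate | discriminate | by [] | lia | ].

Ltac sweep_left g wf :=
  eapply (halts_with_sweep_left (g := g) (wf := wf));
  [reflexivity | discriminate | discriminate | by case | by case
  | first [by [] | by move=> p /mapP [[] _ ->]] | rewrite ?size_map; lia | ].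

Lemma write_yes A B : halts_with (enc yes_inst) (conf TestL A (Some false :: B)) 12.
Proof. by do 6 step_right; do 6 step_left; apply: halts_with_halt. Qed.

Lemma write_no A B : halts_with (enc no_inst) (conf TestL A (Some true :: B)) 12.
Proof. by do 6 step_right; do 6 step_left; apply: halts_with_halt. Qed.

Lemma read_out_some x : read_out (head None (map Some x) :: behead (map Some x)) = x.
Proof. by case: x => //= b x; congr (_ :: _); elim: x => //= c x ->. Qed.

Section ComparisonRound.
Variables (out : seq bool) (c : cmp) (P U Pk Uk : seq bool) (x y : bool).
Variable T : seq (option bool).

Lemma mark_pair N :
  halts_with out (conf (BackKFlag (cmp_step c x y))
      (None :: marked (rcons P x) ++ unmarked U ++ Some false :: marked Pk)
      (None :: Some y :: unmarked Uk ++ T)) N ->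
  halts_with out (conf (NextN c) (None :: marked P)
      (unmarked (x :: U) ++ Some false :: marked Pk ++ unmarked (y :: Uk) ++ T))
    (N + 2 * size U + 2 * size Pk + 5).
Proof.
move=> halts; rewrite !flagged_cons !cat_cons.
step_right; step_right; sweep_right; step_right; sweep_right; step_right; step_left.
move: halts; rewrite flagged_rcons -!cats1 -!catA /= => halts.
by apply: halts_with_le halts; lia.
Qed.

Lemma return_pair N :
  halts_with out (conf (NextN c) (None :: marked (rcons P x))
      (unmarked U ++ Some false :: marked (rcons Pk y) ++ unmarked Uk ++ T)) N ->
  halts_with out (conf (BackKFlag c)
      (None :: marked (rcons P x) ++ unmarked U ++ Some false :: marked Pk)
      (None :: Some y :: unmarked Uk ++ T))
    (N + 2 * size U + 2 * size Pk + 5).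
Proof.
move=> halts.
have tape : None :: marked (rcons P x) ++ unmarked U ++ Some false :: marked Pk =
    rcons (None :: marked (rcons P x) ++ unmarked U) (Some false) ++ marked Pk.
  by rewrite -[rcons _ (Some false)]cats1 /= -!catA.
pose back_k (b : bool) := if b then BackKFlag c else BackKSep c.
rewrite tape; sweep_left back_k (None : option bool); rewrite -map_comp map_id size_map.
move: halts; rewrite !flagged_rcons -!catA /= => halts.
rewrite -cat_cons -!cat_rcons.
case/lastP: U halts => [|U' u] halts.
  rewrite [_ ++ unmarked [::]]cats0; step_left; step_left; step_right; step_right.
  rewrite -!cats1 -!catA /=.
  by apply: halts_with_le halts; lia.
rewrite size_rcons flagged_rcons catA -[_ ++ [:: Some true; Some u]]cat_rcons cats1.
step_left; step_left; sweep_left (fun _ : bool => BackNFlag c) (Some true).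
rewrite -map_comp map_id size_map; step_left; step_right; step_right.
move: halts; rewrite flagged_rcons -!catA /= => halts.
rewrite -!cats1 -!catA /=.
by apply: halts_with_le halts; lia.
Qed.
End ComparisonRound.

Section Trace.
Variable I : inst.
Local Notation n := (inst_n I).
Local Notation k := (inst_k I).
Local Notation l := (inst_l I).

Local Notation bits_n := (bits n).
Local Notation bits_k := (bits k).

Definition tail_cells := map Some (enc_nat l ++ enc_edges (inst_E I)).

Definition verdict := if l == 0 then yes_inst else no_inst.

Lemma enc_cells : map Some (enc I) =
  unmarked bits_n ++ Some false :: unmarked bits_k ++ Some false :: tail_cells.
Proof.
rewrite /enc (map_cat _ (enc_nat n)) (map_cat _ (enc_nat k)).
by rewrite -/tail_cells !enc_nat_cells -!catA.
Qed.

Lemma reduce_degenerate : ~~ (2 <= k <= n) -> reduce I = verdict.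
Proof. by rewrite /reduce => /negbTE ->. Qed.

Lemma reduce_id : 2 <= k <= n -> reduce I = I.
Proof. by rewrite /reduce => ->. Qed.

Lemma write_verdict A : halts_with (enc verdict) (conf TestL A tail_cells) 12.
Proof.
rewrite /verdict /tail_cells /enc_nat; have [-> | l_neq0] := eqVneq l 0.
  exact: write_yes.
have : bits l != [::] by rewrite bits_eq0.
by case: (bits l) => //= b s _; apply: write_no.
Qed.

Lemma restore_input F P U :
  F <> Halt -> table F (Some false) = (RestoreKBit, Some false, MLeft) ->
  bits_n = P ++ U -> P != [::] ->
  halts_with (enc I)
    (conf F (None :: marked P ++ unmarked U ++ Some false :: marked bits_k)
       (Some false :: tail_cells))
    (2 * size bits_k + 2 * size bits_n + 10).
Proof.
move=> F_run F_table bits_nE P_nil.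
pose ps := [seq (None, x) | x <- P] ++ [seq (Some true, x) | x <- U].
have [ps' [f [x psE]]] : exists ps' f x, ps = rcons ps' (f, x).
  case/lastP: P P_nil {bits_nE} @ps => // P' p _; case/lastP: U => [|U' u].
    by exists [seq (None, x) | x <- P'], None, p; rewrite cats0 map_rcons.
  exists ([seq (None, x) | x <- rcons P' p] ++ [seq (Some true, x) | x <- U']), (Some true), u.
  by rewrite rcons_cat (map_rcons (fun x => (Some true, x))).
have ps_bits : bits_n = rcons (map snd ps') x.
  have : map snd ps = bits_n by rewrite map_cat -!map_comp !map_id bits_nE.
  by rewrite psE map_rcons => <-.
have size_ps : size bits_n = (size ps').+1 by rewrite ps_bits size_rcons size_map.
have tape_k : None :: marked P ++ unmarked U ++ Some false :: marked bits_k =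
    rcons (None :: marked P ++ unmarked U) (Some false) ++ marked bits_k.
  by rewrite -cats1 /= -!catA.
have tape_n :
    None :: marked P ++ unmarked U = rcons (rcons (rcons [::] None ++ cells ps') f) (Some x).
  by rewrite -cells_cat -/ps psE -cats1 cells_cat /= -!cats1 -!catA.
have tape : unmarked (map snd ps') ++
    [:: Some true, Some x, Some false & unmarked bits_k ++ Some false :: tail_cells] =
    map Some (enc I).
  by rewrite enc_cells ps_bits flagged_rcons -catA.
pose restore_k (b : bool) := if b then RestoreKFlag else RestoreKSep.
rewrite tape_k.
apply: (halts_with_sweep_left (g := restore_k) (wf := Some true) F_table F_run).
- by [].
- by case.
- by case.
- by move=> p /mapP [[] _ ->].
- by rewrite size_map; lia.
rewrite -map_comp map_id tape_n size_map; step_left; step_left.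
sweep_left (fun _ : bool => RestoreNFlag) (Some true).
by rewrite tape; step_right; apply: halts_with_le (halts_with_halt _ (read_out_some _)).
Qed.

Definition left_at i := None :: marked (take i bits_n).

Definition right_at i := unmarked (drop i bits_n) ++ Some false ::
  marked (take i bits_k) ++ unmarked (drop i bits_k) ++ Some false :: tail_cells.

Definition round_time := 4 * size bits_n + 4 * size bits_k + 30.

Lemma compare_round out c i N : i < size bits_n -> i < size bits_k ->
  halts_with out (conf (NextN (cmp_step c (nth false bits_n i) (nth false bits_k i)))
    (left_at i.+1) (right_at i.+1)) N ->
  halts_with out (conf (NextN c) (left_at i) (right_at i)) (N + round_time).
Proof.
move=> i_n i_k; rewrite /left_at /right_at.
rewrite (take_nth false i_n) (take_nth false i_k) (drop_nth false i_n) (drop_nth false i_k).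
have := size_drop i.+1 bits_n; have := size_drop i.+1 bits_k; have := size_take i bits_k.
rewrite i_k; move: (nth false _ _) (nth false _ _) (take i _) (drop _ _) (take i _) (drop _ _).
move=> x y P U Pk Uk size_Pk size_Uk size_U /return_pair /mark_pair.
by apply: halts_with_le; rewrite /round_time; lia.
Qed.

Lemma finish_n_shorter c : size bits_n < size bits_k ->
  halts_with (enc (reduce I)) (conf (NextN c) (left_at (size bits_n)) (right_at (size bits_n)))
    round_time.
Proof.
move=> n_k; rewrite reduce_degenerate; last first.
  by rewrite negb_and -!ltnNge (ltn_size_bits n_k) orbT.
rewrite /left_at /right_at take_size drop_size (drop_nth false n_k).
have := size_take (size bits_n) bits_k; rewrite n_k.
have := size_drop (size bits_n).+1 bits_k.
move: (nth false _ _) (take _ _) (drop _ _) => y Pk Uk size_Uk size_Pk.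
rewrite flagged_cons /round_time; step_right; sweep_right; step_right; step_right; sweep_right.
by step_right; apply: (halts_with_le _ (write_verdict _)); lia.
Qed.

Lemma finish_same_length : 2 <= k -> size bits_n = size bits_k ->
  halts_with (enc (reduce I))
    (conf (NextN (cmp_nat n k)) (left_at (size bits_n)) (right_at (size bits_n))) round_time.
Proof.
move=> k_ge2 n_k; rewrite /left_at /right_at take_size drop_size n_k take_size drop_size.
rewrite /round_time -n_k; step_right; sweep_right.
have bits_k0 : bits_k != [::] by rewrite bits_eq0 -lt0n ltnW.
have [n_lt_k | k_le_n] := ltnP n k.
  rewrite /cmp_nat n_lt_k reduce_degenerate; last by rewrite negb_and -!ltnNge n_lt_k orbT.
  by step_right; apply: (halts_with_le _ (write_verdict _)); lia.
rewrite reduce_id ?k_ge2 //.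
have : cmp_nat n k <> CLt by rewrite /cmp_nat ltnNge k_le_n; case: (n == k).
move: (cmp_nat n k) => c c_ge.
have bits_n0 : bits_n != [::] by rewrite -size_eq0 n_k size_eq0.
have restored := @restore_input (EndN c) bits_n [::] ltac:(discriminate)
  ltac:(by case: c c_ge) (esym (cats0 _)) bits_n0.
by rewrite -cats1 -catA; apply: halts_with_le restored; lia.
Qed.

Lemma finish_k_shorter c : 2 <= k -> size bits_k < size bits_n ->
  halts_with (enc (reduce I))
    (conf (NextN c) (left_at (size bits_k)) (right_at (size bits_k))) round_time.
Proof.
move=> k_ge2 k_n; rewrite reduce_id; last by rewrite k_ge2 ltnW // (ltn_size_bits k_n).
rewrite /left_at /right_at take_size drop_size (drop_nth false k_n).
have restored := @restore_input (SkipKDone c (nth false bits_n (size bits_k)))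
  (rcons (take (size bits_k) bits_n) (nth false bits_n (size bits_k)))
  (drop (size bits_k).+1 bits_n) ltac:(discriminate) erefl
  ltac:(by rewrite -take_nth // cat_take_drop) ltac:(by case: (take _ _)).
have := size_drop (size bits_k).+1 bits_n.
move: (nth false _ _) (take _ _) (drop _ _) restored => x P U restored size_U.
rewrite flagged_cons /round_time; step_right; step_right; sweep_right; step_right; sweep_right.
move: restored; rewrite flagged_rcons -!catA /= => restored.
by rewrite -!cats1 -!catA /=; apply: halts_with_le restored; lia.
Qed.

Lemma compare_loop j i : 2 <= k -> i + j = minn (size bits_n) (size bits_k) ->
  halts_with (enc (reduce I))
    (conf (NextN (cmp_bits (take i bits_n) (take i bits_k))) (left_at i) (right_at i))
    (j.+1 * round_time).
Proof.
move=> k_ge2; elim: j i => [|j IHj] i i_min.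
  rewrite addn0 in i_min; rewrite mul1n.
  case: (ltngtP (size bits_n) (size bits_k)) => n_k.
  - by move: i_min; rewrite (minn_idPl (ltnW n_k)) => ->; apply: finish_n_shorter.
  - by move: i_min; rewrite (minn_idPr (ltnW n_k)) => ->; apply: finish_k_shorter.
  - move: i_min; rewrite -n_k minnn => ->.
    rewrite [X in take X bits_k]n_k !take_size cmp_bitsE // !nat_of_bitsK.
    exact: finish_same_length.
have i_n : i < size bits_n by move: i_min; rewrite /minn; case: ifP; lia.
have i_k : i < size bits_k by move: i_min; rewrite /minn; case: ifP; lia.
apply: (halts_with_le _ (compare_round i_n i_k _)); first by rewrite mulSn addnC.
rewrite -cmp_bits_rcons; last by rewrite !size_take i_n i_k.
by rewrite -!take_nth //; apply: IHj; rewrite addSnnS.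
Qed.

Definition run_time := 4 * size bits_n + 40 + (size bits_k).+1 * round_time.

Lemma reducer_run : halts_with (enc (reduce I)) (init reducer (enc I)) run_time.
Proof.
rewrite init_conf enc_cells /run_time.
apply: halts_with_begin; [by case: bits_n | lia |].
step_right; sweep_right; step_right.
have := bits_canonical k; have := nat_of_bitsK k.
have := @compare_loop (minn (size bits_n) (size bits_k)) 0.
rewrite /left_at /right_at !take0 !drop0.
case: bits_k => [|y0 [|y1 s]] loop val_k can_k.
- rewrite reduce_degenerate -?val_k //=; cbn [size].
  step_right.
  by apply: (halts_with_le _ (write_verdict _)); lia.
- have y0_true : y0 = true by move: can_k.
  subst y0; rewrite reduce_degenerate -?val_k //=; cbn [size].
  step_right; step_right; step_right.
  by apply: (halts_with_le _ (write_verdict _)); lia.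
have k_ge2 : 2 <= k.
  rewrite -val_k; apply: leq_trans (canonical_nat_of_bits_ge can_k isT) => /=.
  by rewrite expnS leq_pmulr ?expn_gt0.
move/(_ k_ge2 erefl): loop => loop.
have min_k : minn (size bits_n) (size s).+2 <= (size s).+2 := geq_minr _ _.
have := leq_mul min_k (leqnn round_time); move: loop; cbn [size] => loop bound_loop.
rewrite !flagged_cons; step_right.
case: y0 {val_k can_k} loop => loop; [step_right; step_left | ]; step_left; step_left.
all: sweep_left (fun _ : bool => RewindFlag) (Some true); rewrite -map_comp map_id size_map.
all: by step_right; apply: halts_with_le loop; lia.
Qed.

Lemma size_enc : 2 * size bits_n + 2 * size bits_k + 2 <= size (enc I).
Proof.
have := congr1 size enc_cells; rewrite size_map => ->.
by rewrite size_cat /= size_cat /= !size_flagged; lia.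
Qed.

Lemma run_time_le : run_time <= 60 * size (enc I) ^ 2.
Proof.
have := size_enc; rewrite /run_time /round_time.
move: (size bits_n) (size bits_k) (size (enc I)) => a b S; nia.
Qed.
End Trace.

Local Open Scope ring_scope.

Theorem proposition1 (R : realType) (lam gam : R) :
  1 <= lam -> 1 <= gam ->
  poly_fpt_reduction
    gap1_yes (gap1_no (2 * lam * gam ^+ 2))
    (@gap2_yes R) (gap2_no lam gam).
Proof.
move=> lam1 gam1; exists reducer, 60%N, id => I.
have [t le_t [halted_t output_t]] := reducer_run I.
exists t; split.
  apply: leq_trans le_t (leq_trans (run_time_le I) (leq_trans _ (leq_addr 60 _))).
  by rewrite leq_mul2l leq_pexp2l //; have := size_enc I; lia.
split=> //; exists (reduce I); split=> //; split; first exact: reduce_k.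
exact: reduce_correct.
Qed.
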